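(* Let $n$ be a positive odd integer and let $G$ be a finite group. Then $\mathrm{Pow}(G)\cong \mathrm{Pow}(Q_8\times\mathbb{Z}_n)$ if and only if $G\cong Q_8\times\mathbb{Z}_n$.
   Context: All groups are finite. $Q_8$ is the quaternion group of order $8$ and $\mathbb{Z}_n$ the cyclic group of order $n$. For a group $X$, the power graph $\mathrm{Pow}(X)$ is the simple graph with vertex set $X$ in which two distinct vertices $x,y$ are adjacent if and only if $y\in\langle x\rangle$ or $x\in\langle y\rangle$. *)

From mathcomp Require Import all_boot all_algebra all_fingroup all_solvable.
Set Implicit Arguments. Unset Strict Implicit. Unset Printing Implicit Defensive.
Local Open Scope group_scope.

Definition pow_adj (gT : finGroupType) (x y : gT) : bool :=
  (x != y) && ((y \in <[x]>) || (x \in <[y]>)).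

Definition pow_graph_isom (gT hT : finGroupType) (G : {set gT}) (H : {set hT}) : Prop :=
  exists f : gT -> hT,
    [/\ {in G &, injective f}, f @: G = H &
        {in G &, forall x y, pow_adj (f x) (f y) = pow_adj x y}].

(* Q_8 x Z_n as a subgroup of the external product type 'Q_8 * 'Z_n;
   for n > 0, Zp n is the cyclic group of order n. *)
Definition Q8xZ (n : nat) : {set ('Q_8 * 'Z_n)%type} := setX 'Q_8 (Zp n).

(* Write H = Q x <[g]> for Q8 x Z_n. Closed neighbourhoods in a power graph are
   the sets of elements comparable with a given one (one lies in the cyclic
   group generated by the other). If y = (r, g) has order 4n, its neighbourhood
   is <[y]>, and H is the union of three such cyclic groups (r = i, j, k).
   A power-graph isomorphism f : G -> H preserves neighbourhoods, cliques and
   twins. Pick m of maximal order above a preimage yb of y, so that the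
   neighbourhood of m is <[m]> and f m lies in <[y]>; the structure of the
   cyclic group <[m]> then forces either f m to have order 4n as well, or m
   to generate the same group as yb. In both cases the neighbourhood of yb is
   a cyclic group of order 4n, so G, of order 8n, is a union of cyclic
   subgroups of order 4n. Such a group has a unique involution, hence a
   quaternion Sylow 2-subgroup, and a central cyclic complement of order n. *)

From mathcomp Require Import all_boot all_algebra all_fingroup all_solvable.
From mathcomp Require Import zify.
Set Implicit Arguments. Unset Strict Implicit. Unset Printing Implicit Defensive.

Lemma dvdn_lcm_gcd a b c : a %| lcmn b c -> gcdn a c %| b -> a %| b.
Proof.
move=> a_lcm gcd_b; case: (posnP b) => [-> | b_gt0]; first exact: dvdn0.
case: (posnP c) => [c0 | c_gt0]; first by move: gcd_b; rewrite c0 gcdn0.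
case: (posnP a) => [a0 | a_gt0].
  by move: a_lcm; rewrite a0 dvd0n eqn0Ngt lcmn_gt0 b_gt0 c_gt0.
apply/(dvdn_partP _ a_gt0) => p p_a.
have p_pr : prime p by move: p_a; rewrite mem_primes => /andP[].
rewrite p_part pfactor_dvdn //.
have := dvdn_leq_log p (_ : 0 < lcmn b c) a_lcm.
have := dvdn_leq_log p b_gt0 gcd_b.
by rewrite logn_lcm // logn_gcd // ?lcmn_gt0 ?b_gt0 ?c_gt0 //; lia.
Qed.

(* Compare [d] with the [r]-part of [k], for a prime [r] such that [k`_r] does
   not divide [d], and then with the [s]-part of [k] for another prime [s]. *)
Lemma dvdn_comparable_trivial k d : 0 < k -> ~~ (pdiv k).-nat k -> d %| k ->
  (forall e, e %| k -> (e %| d) || (d %| e)) -> d = 1 \/ d = k.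
Proof.
move=> k_gt0 not_pk d_k d_cmp.
have k_gt1 : 1 < k.
  by rewrite ltn_neqAle k_gt0 andbT eq_sym; apply: contraNneq not_pk => ->.
case k_d: (k %| d); first by right; apply/eqP; rewrite eqn_dvd k_d d_k.
have [r r_k r_d] : exists2 r, r \in primes k & ~~ (k`_r %| d).
  apply/hasP; rewrite has_predC; apply: contraFN k_d => /allP k_d.
  by apply/(dvdn_partP _ k_gt0) => r /k_d.
have r_pr : prime r by move: r_k; rewrite mem_primes => /andP[].
have rnat_d : r.-nat d.
  have := d_cmp _ (dvdn_part r k); rewrite (negPf r_d) /= => d_kr.
  exact: pnat_dvd d_kr (part_pnat r k).
have [s s_k s_r] : exists2 s, s \in primes k & s != r.
  move: not_pk; rewrite /pnat k_gt0 /= => /allPn[t t_k t_p].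
  case: (eqVneq (pdiv k) r) => [p_r|p_r]; last first.
    by exists (pdiv k) => //; rewrite mem_primes pdiv_prime ?pdiv_dvd ?k_gt0.
  by exists t => //; rewrite -p_r; move: t_p; rewrite inE.
have s_pr : prime s by move: s_k; rewrite mem_primes => /andP[].
case/orP: (d_cmp _ (dvdn_part s k)) => [ks_d|d_ks].
  have s_ks : s %| k`_s by rewrite p_part dvdn_exp // logn_gt0.
  have := pnat_dvd (dvdn_trans s_ks ks_d) rnat_d.
  by rewrite pnatE // inE (negPf s_r).
left; apply: (@pnat_1 r) => //.
by apply: sub_in_pnat (pnat_dvd d_ks (part_pnat s k)) => x _; rewrite !inE => /eqP ->.
Qed.

Lemma totient_pfactor_gt2 p k : prime p -> 4 < p ^ k -> 2 < totient (p ^ k).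
Proof.
move=> p_pr pk_gt4; have p_gt1 := prime_gt1 p_pr.
case: k pk_gt4 => [|k] //; rewrite totient_pfactor // expnS.
have : 0 < p ^ k by rewrite expn_gt0 ltnW.
move: (p ^ k) => a; nia.
Qed.

Local Open Scope group_scope.

Section PowerGraph.
Variable gT : finGroupType.
Implicit Types (a b m u v w x y : gT) (A : {set gT}) (G M : {group gT}).

Definition cyc_cmp x y := (y \in <[x]>) || (x \in <[y]>).
Definition pow_nbhd A x := [set v in A | cyc_cmp x v].
Definition pow_twins A x := [set v in A | pow_nbhd A v == pow_nbhd A x].
Definition cmp_clique A := {in A &, forall u v, cyc_cmp u v}.

Lemma cyc_cmpC x y : cyc_cmp x y = cyc_cmp y x.
Proof. by rewrite /cyc_cmp orbC. Qed.

Lemma cyc_cmpxx x : cyc_cmp x x.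
Proof. by rewrite /cyc_cmp cycle_id. Qed.

Lemma pow_adjE x y : pow_adj x y = (x != y) && cyc_cmp x y.
Proof. by []. Qed.

Lemma cyc_cmp_subG x y : cyc_cmp x y = (<[y]> \subset <[x]>) || (<[x]> \subset <[y]>).
Proof. by rewrite /cyc_cmp !cycle_subG. Qed.

Lemma cyc_cmp_cycle x x' y : <[x]> = <[x']> -> cyc_cmp x y = cyc_cmp x' y.
Proof. by rewrite !cyc_cmp_subG => ->. Qed.

Lemma pow_nbhd_cycle A x x' : <[x]> = <[x']> -> pow_nbhd A x = pow_nbhd A x'.
Proof. by move=> eq_xx'; apply/setP => v; rewrite !inE (cyc_cmp_cycle _ eq_xx'). Qed.

Lemma cycle_eq_order a b : a \in <[b]> -> #[a] = #[b] -> <[a]> = <[b]>.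
Proof.
by move=> a_b oab; apply/eqP; rewrite eqEcard cycle_subG a_b -!orderE oab leqnn.
Qed.

Lemma cyc_cmp_eq_order a b : #[a] = #[b] -> cyc_cmp a b = (a \in <[b]>).
Proof.
move=> oab; apply/orP/idP => [[b_a | //] | a_b]; last by right.
by rewrite (cycle_eq_order b_a (esym oab)) cycle_id.
Qed.

Lemma cyclic_cmp M u w : cyclic M -> u \in M -> w \in M ->
  cyc_cmp u w = (#[w] %| #[u]) || (#[u] %| #[w]).
Proof.
by move=> cM uM wM; rewrite cyc_cmp_subG !orderE !(cardSg_cyclic cM) ?cycle_subG.
Qed.

Lemma exists_order_in_cycle a e : e %| #[a] -> exists2 v, v \in <[a]> & #[v] = e.
Proof.
move=> e_a; exists (a ^+ (#[a] %/ e)); first exact: mem_cycle.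
have : <[a ^+ (#[a] %/ e)]>%G \in [set <[a ^+ (#[a] %/ e)]>%G] by rewrite set11.
by rewrite -cycle_sub_group // inE orderE => /andP[_ /eqP].
Qed.

Lemma exists_maximal_cycle G y : y \in G ->
  exists2 m, m \in G & y \in <[m]> /\ pow_nbhd G m = <[m]>.
Proof.
move=> Gy; pose P := [pred v | (v \in G) && (y \in <[v]>)].
have Py : P y by rewrite /P /= Gy cycle_id.
case: (arg_maxnP (fun v => #[v]) Py) => m /andP[Gm y_m] max_m.
exists m => //; split => //; apply/setP => v; rewrite inE.
apply/andP/idP => [[Gv /orP[// | m_v]] | v_m]; last first.
  by rewrite /cyc_cmp v_m (subsetP _ _ v_m) ?cycle_subG.
have y_v : y \in <[v]> by rewrite (subsetP _ _ y_m) ?cycle_subG.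
have le_mv : #[m] <= #[v] by rewrite dvdn_leq // cardSg ?cycle_subG.
have eq_vm : #[v] = #[m].
  by apply/eqP; rewrite eqn_leq le_mv andbT; apply: max_m; rewrite /P /= Gv y_v.
by rewrite (cycle_eq_order m_v (esym eq_vm)) cycle_id.
Qed.

Lemma pnat_cycle_clique (p : nat) m : p.-nat #[m] -> cmp_clique <[m]>.
Proof.
move=> p_m u v u_m v_m; rewrite (cyclic_cmp (cycle_cyclic m)) //.
have [a ->] := p_natP (pnat_dvd (order_dvdG u_m) p_m).
have [b ->] := p_natP (pnat_dvd (order_dvdG v_m) p_m).
by case: (leqP a b) => [/(dvdn_exp2l p) -> | /ltnW/(dvdn_exp2l p) ->]; rewrite ?orbT.
Qed.

(* [y] is comparable with elements of every order dividing #[m]. *)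
Lemma cycle_dominating m y : ~~ (pdiv #[m]).-nat #[m] -> y \in <[m]> ->
  {in <[m]>, forall v, cyc_cmp y v} -> y = 1 \/ <[y]> = <[m]>.
Proof.
move=> not_pm y_m y_dom; have cM := cycle_cyclic m.
have [oy | oy] : #[y] = 1%N \/ #[y] = #[m].
  apply: dvdn_comparable_trivial (order_dvdG y_m) _ => // e e_m.
  have [v v_m <-] := exists_order_in_cycle e_m.
  by rewrite -(cyclic_cmp cM y_m v_m) y_dom.
- by left; apply/eqP; rewrite -order_eq1 oy.
- by right; apply: cycle_eq_order.
Qed.

(* Elements of orders lcm(#[t2], #[t3]) and gcd(#[t1], #[t3]) are common
   neighbours, which forces #[t1] to divide #[t2] unless #[t2] divides #[t1]. *)
Lemma cyclic_cmp_of_common_nbhd M t1 t2 t3 : cyclic M ->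
  t1 \in M -> t2 \in M -> t3 \in M ->
  {in M, forall v, cyc_cmp t2 v -> cyc_cmp t3 v -> cyc_cmp t1 v} ->
  {in M, forall v, cyc_cmp t1 v -> cyc_cmp t3 v -> cyc_cmp t2 v} ->
  cyc_cmp t1 t2.
Proof.
move=> cM M1 M2 M3 nbhd1 nbhd2; have [a defM] := cyclicP cM.
have o_M u : u \in M -> #[u] %| #[a] by rewrite defM; apply: order_dvdG.
have elt_M e : e %| #[a] -> exists2 v, v \in M & #[v] = e.
  by move=> e_a; have [v] := exists_order_in_cycle e_a; rewrite -defM; exists v.
rewrite (cyclic_cmp cM) //; apply/orP.
case: (boolP (#[t2] %| #[t1])) => [| not21]; [by left | right].
have [vL ML oL] : exists2 v, v \in M & #[v] = lcmn #[t2] #[t3].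
  by apply: elt_M; rewrite dvdn_lcm !o_M.
have t1_L : #[t1] %| lcmn #[t2] #[t3].
  have := nbhd1 _ ML; rewrite !(cyclic_cmp cM) // oL dvdn_lcml dvdn_lcmr !orbT.
  case/(_ isT isT)/orP => // L_t1; case/negP: not21.
  exact: dvdn_trans (dvdn_lcml _ _) L_t1.
have [vG MG oG] : exists2 v, v \in M & #[v] = gcdn #[t1] #[t3].
  by apply: elt_M; rewrite (dvdn_trans (dvdn_gcdl _ _)) ?o_M.
have G_t2 : gcdn #[t1] #[t3] %| #[t2].
  have := nbhd2 _ MG; rewrite !(cyclic_cmp cM) // oG dvdn_gcdl dvdn_gcdr.
  case/(_ isT isT)/orP => // t2_G; case/negP: not21.
  exact: dvdn_trans t2_G (dvdn_gcdl _ _).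
exact: dvdn_lcm_gcd t1_L G_t2.
Qed.

End PowerGraph.

Section PowerGraphIsom.
Variables (gT hT : finGroupType) (G : {set gT}) (H : {set hT}) (f : gT -> hT).
Hypotheses (f_inj : {in G &, injective f}) (f_im : f @: G = H)
  (f_adj : {in G &, forall x y, pow_adj (f x) (f y) = pow_adj x y}).

Lemma pow_iso_cmp : {in G &, forall x y, cyc_cmp (f x) (f y) = cyc_cmp x y}.
Proof.
move=> x y Gx Gy; case: (eqVneq x y) => [-> | ne_xy]; first by rewrite !cyc_cmpxx.
by have := f_adj Gx Gy; rewrite !pow_adjE (inj_in_eq f_inj) // ne_xy.
Qed.

Lemma pow_iso_mem x : x \in G -> f x \in H.
Proof. by rewrite -f_im; apply: imset_f. Qed.

Lemma pow_iso_onto w : w \in H -> exists2 v, v \in G & w = f v.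
Proof. by rewrite -f_im => /imsetP. Qed.

Lemma pow_iso_nbhd_mem x v : x \in G -> v \in G ->
  (f v \in pow_nbhd H (f x)) = (v \in pow_nbhd G x).
Proof. by move=> Gx Gv; rewrite !inE pow_iso_mem // Gv pow_iso_cmp. Qed.

Lemma pow_iso_nbhd_eq x x' : x \in G -> x' \in G ->
  (pow_nbhd H (f x) == pow_nbhd H (f x')) = (pow_nbhd G x == pow_nbhd G x').
Proof.
move=> Gx Gx'; apply/eqP/eqP => eq_nbhd; apply/setP => v.
  case Gv: (v \in G); last by rewrite !inE Gv.
  by rewrite -!pow_iso_nbhd_mem // eq_nbhd.
case Hv: (v \in H); last by rewrite !inE Hv.
by have [u Gu ->] := pow_iso_onto Hv; rewrite !pow_iso_nbhd_mem // eq_nbhd.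
Qed.

Lemma card_pow_iso_setId (P : pred gT) (Q : pred hT) :
  {in G, forall v, Q (f v) = P v} -> #|[set v in G | P v]| = #|[set w in H | Q w]|.
Proof.
move=> fPQ; have -> : [set w in H | Q w] = f @: [set v in G | P v].
  apply/setP => w; apply/setIdP/imsetP => [[Hw Qw] | [v /setIdP[Gv Pv] ->]].
    by have [v Gv def_w] := pow_iso_onto Hw; exists v; rewrite // inE Gv -fPQ -?def_w.
  by rewrite pow_iso_mem ?fPQ.
by rewrite card_in_imset // => u v /setIdP[Gu _] /setIdP[Gv _]; apply: f_inj.
Qed.

Lemma card_pow_iso_nbhd x : x \in G -> #|pow_nbhd G x| = #|pow_nbhd H (f x)|.
Proof. by move=> Gx; apply: card_pow_iso_setId => v Gv; rewrite pow_iso_cmp. Qed.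

Lemma card_pow_iso_twins x : x \in G -> #|pow_twins G x| = #|pow_twins H (f x)|.
Proof. by move=> Gx; apply: card_pow_iso_setId => v Gv; rewrite pow_iso_nbhd_eq. Qed.

Lemma pow_iso_clique x : x \in G ->
  cmp_clique (pow_nbhd G x) -> cmp_clique (pow_nbhd H (f x)).
Proof.
move=> Gx clique_x _ w /setIdP[/pow_iso_onto[u Gu ->] xu].
move=> /setIdP[/pow_iso_onto[v Gv ->] xv].
by rewrite pow_iso_cmp // clique_x // inE ?Gu ?Gv -pow_iso_cmp.
Qed.

End PowerGraphIsom.

Lemma isog_pow_graph_isom (gT hT : finGroupType) (G : {group gT}) (H : {group hT}) :
  G \isog H -> pow_graph_isom G H.
Proof.
case/isogP => phi inj_phi im_phi; have phi_inj : {in G &, injective phi} by apply/injmP.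
exists phi; split => //; first by rewrite -morphimEdom.
have phi_cycle u v : u \in G -> v \in G -> (phi v \in <[phi u]>) = (v \in <[u]>).
  move=> Gu Gv; rewrite -morphim_cycle //; apply/idP/idP => [phiv_u | v_u].
    by rewrite -(injmK inj_phi (_ : <[u]> \subset G)) ?cycle_subG // mem_morphpre.
  exact: mem_morphim.
by move=> x y Gx Gy; rewrite !pow_adjE (inj_in_eq phi_inj) // /cyc_cmp !phi_cycle.
Qed.

Lemma expg_pair (qT kT : finGroupType) (a : qT) (b : kT) k :
  (a, b) ^+ k = (a ^+ k, b ^+ k).
Proof. by elim: k => // k IHk; rewrite !expgS IHk. Qed.

Lemma cycle_pair (qT kT : finGroupType) (a : qT) (b : kT) :
  coprime #[a] #[b] -> <[(a, b)]> = setX <[a]> <[b]>.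
Proof.
move=> co_ab; apply/setP => -[u v]; rewrite inE /=.
apply/cycleP/andP => [[e] | [/cycleP[i ->] /cycleP[j ->]]].
  by rewrite expg_pair => -[-> ->]; rewrite !mem_cycle.
exists (chinese #[a] #[b] i j); rewrite expg_pair; congr (_, _).
  by rewrite -(expg_mod_order a (chinese _ _ _ _)) chinese_modl // expg_mod_order.
by rewrite -(expg_mod_order b (chinese _ _ _ _)) chinese_modr // expg_mod_order.
Qed.

Lemma cyc_cmp_pair (qT kT : finGroupType) (a b : qT) (c : kT) :
  coprime #[a] #[c] -> coprime #[b] #[c] -> cyc_cmp (a, c) (b, c) = cyc_cmp a b.
Proof. by move=> co_ac co_bc; rewrite /cyc_cmp !cycle_pair // !inE /= cycle_id !andbT. Qed.

Lemma order4_sqr_neq1 (gT : finGroupType) (q : gT) : #[q] = 4 -> q ^+ 2 != 1.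
Proof. by rewrite -order_dvdn => ->. Qed.

Lemma order4_cycle_gen (gT : finGroupType) (a b : gT) : #[b] = 4 -> a \in <[b]> ->
  a ^+ 2 != 1 -> a = b \/ a = b^-1.
Proof.
move=> ob /cycleP[e ->]; rewrite -(expg_mod_order b e) ob.
have b4 : b ^+ 4 = 1 by rewrite -ob expg_order.
have : e %% 4 < 4 by rewrite ltn_pmod.
case: (e %% 4) => [|[|[|[|//]]]] _.
- by rewrite expg1n eqxx.
- by left.
- by rewrite -expgM b4 eqxx.
- by right; rewrite invg_expg ob.
Qed.

(* Q8 described through its three cyclic subgroups <[i]>, <[j]>, <[k]> of order
   4; the third clause says that 1 and the central involution lie in each. *)
Definition quaternion_triple (qT : finGroupType) (Q : {set qT}) (i j k : qT) :=
  [/\ #|Q| = 8,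
      {in Q, forall q, q ^+ 2 != 1 -> #[q] = 4},
      {in Q &, forall q r, q ^+ 2 = 1 -> #[r] = 4 -> q \in <[r]>},
      [/\ [/\ i \in Q, j \in Q & k \in Q], [/\ #[i] = 4, #[j] = 4 & #[k] = 4]
        & [/\ ~~ cyc_cmp i j, ~~ cyc_cmp i k & ~~ cyc_cmp j k]]
    & {in Q, forall q, [|| q \in <[i]>, q \in <[j]> | q \in <[k]>]}].

Lemma quaternion_triple_Q8 : exists i j k : 'Q_8, quaternion_triple 'Q_8 i j k.
Proof.
have n_gt2 : 2 < 3 by [].
have isoQ : 'Q_8 \isog 'Q_(2 ^ 3) by rewrite isog_refl.
have [[x y] genQ [oy _ _]] := generators_quaternion n_gt2 isoQ.
have [[_ o_out _] _ [_ _ inv_uniq _ _] [[defQX _] _] _] :=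
  quaternion_structure n_gt2 genQ isoQ.
have [oQ _ ox /setDP[_ X'y]] := genQ.
have {}ox : #[x] = 4 by rewrite ox.
have {}o_out q : q \notin <[x]> -> #[q] = 4 by move=> X'q; rewrite o_out ?inE ?X'q.
have X'xy : x * y \notin <[x]> by rewrite groupMl ?cycle_id.
have oxy := o_out _ X'xy.
have cycle4_normal u : #[u] = 4 -> u ^: 'Q_8 \subset <[u]>.
  move=> ou; rewrite class_sub_norm ?cycle_id //.
  apply: normal_norm (index2_normal (subsetT _) _).
  apply/eqP; rewrite -(eqn_pmul2l (isT : 0 < 4)) -{1}ou orderE Lagrange ?subsetT //.
  by rewrite oQ.
exists x, y, (x * y); split.
- by rewrite oQ.
- move=> q _ q2; case X_q: (q \in <[x]>); last by rewrite o_out ?X_q.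
  have : ~~ (#[q] %| 2) by rewrite order_dvdn.
  have := order_dvdG X_q; rewrite -orderE ox.
  by case: #[q] => [|[|[|[|[|e]]]]].
- move=> q r _ _ q2 or; case: (eqVneq #[q] 1%N) => [/eqP | ne1].
    by rewrite order_eq1 => /eqP ->; rewrite group1.
  have oq : #[q] = 2 by apply/(prime_nt_dvdP _ ne1); rewrite ?order_dvdn ?q2.
  have or2 : #[r ^+ 2] = 2 by rewrite orderXdiv or.
  by rewrite (inv_uniq q) -?(inv_uniq (r ^+ 2)) ?inE ?mem_cycle.
- split; rewrite ?inE //; split.
  + by rewrite cyc_cmpC cyc_cmp_eq_order ?oy ?ox.
  + by rewrite cyc_cmpC cyc_cmp_eq_order ?oxy ?ox.
  + rewrite cyc_cmpC cyc_cmp_eq_order ?oxy ?oy //; apply: contra X'y => xy_y.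
    have x_y : x \in <[y]> by rewrite -(mulgK y x) groupM ?groupV ?cycle_id.
    by rewrite (cycle_eq_order x_y) ?cycle_id // ox oy.
- move=> q _; case X_q: (q \in <[x]>) => //=.
  have : q \in 'Q_8 :\: <[x]> by rewrite !inE X_q.
  rewrite -defQX => /setUP[q_y | q_xy].
    by rewrite (subsetP (cycle4_normal _ oy)).
  by rewrite (subsetP (cycle4_normal _ oxy)) ?orbT.
Qed.

Section QuaternionTimesCyclic.
Variables (qT kT : finGroupType) (Q : {group qT}) (i j k : qT) (g : kT).
Hypotheses (QA : quaternion_triple Q i j k) (odd_g : odd #[g]).
Local Notation H := (setX Q <[g]>).

Lemma Q_order4 q : q \in Q -> q ^+ 2 != 1 -> #[q] = 4.
Proof. by case: QA => _ oQ _ _ _; apply: oQ. Qed.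

Lemma Q_sqr1_mem_cycle q r : q \in Q -> r \in Q -> q ^+ 2 = 1 -> #[r] = 4 -> q \in <[r]>.
Proof. by case: QA => _ _ sqr1Q _ _; apply: sqr1Q. Qed.

Lemma Q_cycle_eq q r : r \in Q -> q \in <[r]> -> q ^+ 2 != 1 -> <[q]> = <[r]>.
Proof.
move=> Qr q_r q2; have Qq : q \in Q by rewrite (subsetP _ _ q_r) ?cycle_subG.
have r2 : r ^+ 2 != 1.
  apply: contra q2 => /eqP r2; case/cycleP: q_r => e ->.
  by rewrite -expgM mulnC expgM r2 expg1n.
by apply: cycle_eq_order q_r _; rewrite !Q_order4.
Qed.

Lemma Q_incomparable q : q \in Q -> q ^+ 2 != 1 ->
  exists2 r, r \in Q /\ #[r] = 4 & ~~ cyc_cmp q r.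
Proof.
move=> Qq q2; have [_ _ _ [[Qi Qj Qk] [oi oj ok] [ij ik jk]] cover] := QA.
case/or3P: (cover q Qq) => q_r.
- by exists j; rewrite // (cyc_cmp_cycle _ (Q_cycle_eq Qi q_r q2)).
- by exists k; rewrite // (cyc_cmp_cycle _ (Q_cycle_eq Qj q_r q2)).
- by exists i; rewrite // (cyc_cmp_cycle _ (Q_cycle_eq Qk q_r q2)) cyc_cmpC.
Qed.

Lemma card_QxC : #|H| = (8 * #[g])%N.
Proof. by case: QA => oQ _ _ _ _; rewrite cardsX oQ -orderE. Qed.

Lemma coprime_QxC w : w \in H -> coprime #[w.1] #[w.2].
Proof.
case: QA => oQ _ _ _ _; rewrite inE => /andP[Qw1 gw2].
have w1_8 : #[w.1] %| (2 ^ 3)%N by rewrite (_ : (2 ^ 3)%N = 8) // -oQ order_dvdG.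
apply: (coprime_dvdl w1_8); apply: (coprime_dvdr (order_dvdG gw2)).
by rewrite coprime_pexpl // coprime2n -orderE.
Qed.

Lemma cycle_QxC w : w \in H -> <[w]> = setX <[w.1]> <[w.2]>.
Proof. by case: w => a b Hab; rewrite cycle_pair ?(coprime_QxC Hab). Qed.

Lemma cyc_cmp_QxC r s : r \in Q -> s \in Q -> cyc_cmp (r, g) (s, g) = cyc_cmp r s.
Proof.
move=> Qr Qs; apply: cyc_cmp_pair.
  by apply: (coprime_QxC (_ : (r, g) \in H)); rewrite !inE Qr cycle_id.
by apply: (coprime_QxC (_ : (s, g) \in H)); rewrite !inE Qs cycle_id.
Qed.

(* The elements of order 4 * #[g] of H. *)
Definition max_elt y := [&& y \in H, #[y.1] == 4 & <[y.2]> == <[g]>].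

Lemma max_elt_pair r : r \in Q -> #[r] = 4 -> max_elt (r, g).
Proof. by move=> Qr or; rewrite /max_elt !inE Qr cycle_id or !eqxx. Qed.

Lemma max_elt_cycle_up y x w : max_elt y -> x \in <[y]> -> x.1 ^+ 2 != 1 ->
  w \in H -> x \in <[w]> -> w \in <[y]>.
Proof.
case/and3P=> Hy _ /eqP y2g x_y x2 Hw x_w.
move: x_y x_w; rewrite !cycle_QxC // !inE => /andP[x1_y _] /andP[x1_w _].
move: Hy Hw; rewrite !inE => /andP[Qy1 _] /andP[Qw1 gw2].
by rewrite y2g gw2 -(Q_cycle_eq Qy1 x1_y x2) (Q_cycle_eq Qw1 x1_w x2) cycle_id.
Qed.

Lemma pow_nbhd_max_elt y : max_elt y -> pow_nbhd H y = <[y]>.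
Proof.
move=> my; have /and3P[Hy /eqP/order4_sqr_neq1 y12 _] := my.
apply/setP => w; rewrite inE; apply/andP/idP => [[Hw /orP[// | y_w]] | w_y].
  exact: max_elt_cycle_up my (cycle_id y) y12 Hw y_w.
by rewrite /cyc_cmp w_y (subsetP _ _ w_y) ?cycle_subG.
Qed.

Lemma pow_nbhd_sub_max_elt y x : max_elt y -> x \in <[y]> -> x.1 ^+ 2 != 1 ->
  pow_nbhd H x \subset <[y]>.
Proof.
move=> my x_y x12; apply/subsetP => w /setIdP[Hw /orP[w_x | x_w]].
  by rewrite (subsetP _ _ w_x) ?cycle_subG.
exact: max_elt_cycle_up my x_y x12 Hw x_w.
Qed.

Lemma pow_nbhd_max_elt_eq y x : max_elt y -> max_elt x -> x \in <[y]> ->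
  pow_nbhd H x = pow_nbhd H y.
Proof.
move=> my mx x_y; rewrite !pow_nbhd_max_elt //.
have /and3P[Hy _ _] := my; have /and3P[_ /eqP/order4_sqr_neq1 x12 _] := mx.
have y_x := max_elt_cycle_up mx (cycle_id x) x12 Hy x_y.
by apply/eqP; rewrite eqEsubset !cycle_subG x_y y_x.
Qed.

Lemma sqr1_mem_cycle_max_elt y x : max_elt y -> x \in H -> x.1 ^+ 2 = 1 ->
  x \in <[y]>.
Proof.
case/and3P=> Hy /eqP oy1 /eqP y2g Hx x12.
move: (Hy) (Hx); rewrite cycle_QxC // !inE y2g => /andP[Qy1 _] /andP[Qx1 ->].
by rewrite Q_sqr1_mem_cycle.
Qed.

Lemma common_nbhd_pair r s t w : r \in Q -> s \in Q -> t \in Q ->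
  #[r] = 4 -> #[s] = 4 -> #[t] = 4 -> ~~ cyc_cmp r s -> w \in H ->
  cyc_cmp (r, g) w -> cyc_cmp (s, g) w -> cyc_cmp (t, g) w.
Proof.
move=> Qr Qs Qt or os ot not_rs Hw rw sw.
have [w12 | w12] := eqVneq (w.1 ^+ 2) 1.
  by rewrite /cyc_cmp sqr1_mem_cycle_max_elt ?max_elt_pair ?orbT.
have /and3P[Hr _ _] := max_elt_pair Qr or; have /and3P[Hs _ _] := max_elt_pair Qs os.
have : w \in <[(r, g)]> by rewrite -pow_nbhd_max_elt ?max_elt_pair // inE Hw.
have : w \in <[(s, g)]> by rewrite -pow_nbhd_max_elt ?max_elt_pair // inE Hw.
rewrite !cycle_QxC // !inE /= => /andP[w1_s _] /andP[w1_r _].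
case/negP: not_rs.
by rewrite /cyc_cmp -(Q_cycle_eq Qr w1_r w12) (Q_cycle_eq Qs w1_s w12) cycle_id.
Qed.

Lemma QxC_cover w : w \in H ->
  [|| w \in <[(i, g)]>, w \in <[(j, g)]> | w \in <[(k, g)]>].
Proof.
have [_ _ _ [[Qi Qj Qk] [oi oj ok] _] cover] := QA.
have /and3P[Hi _ _] := max_elt_pair Qi oi; have /and3P[Hj _ _] := max_elt_pair Qj oj.
have /and3P[Hk _ _] := max_elt_pair Qk ok.
rewrite !cycle_QxC // !inE /= => /andP[Qw1 ->]; rewrite !andbT.
exact: cover.
Qed.

Lemma clique_nbhd_QxC x : x \in H -> x.1 ^+ 2 != 1 ->
  cmp_clique (pow_nbhd H x) -> x.2 = 1.
Proof.
move=> Hx x12 clique_x; move: (Hx); rewrite inE => /andP[Qx1 gx2].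
have Hx2 : (1, x.2) \in H by rewrite !inE group1.
have Hx1 : (x.1 ^+ 2, 1) \in H by rewrite !inE groupX ?group1.
have := clique_x (1, x.2) (x.1 ^+ 2, 1).
rewrite !inE /= /cyc_cmp !cycle_QxC //= !inE /= !cycle1 !inE group1 groupX ?group1 //.
by rewrite mem_cycle cycle_id (negPf x12) gx2 => /(_ isT isT)/eqP.
Qed.

Lemma card_twins_QxC a : a \in Q -> a ^+ 2 != 1 -> #|pow_twins H (a, 1)| <= 2.
Proof.
move=> Qa a2; have Ha : (a, 1) \in H by rewrite !inE Qa group1.
have a_neq1 : a != 1 by apply: contra a2 => /eqP ->; rewrite expg1n.
suff /subset_leq_card : pow_twins H (a, 1) \subset [set (a, 1); (a^-1, 1)].
  by rewrite cards2 => /leq_trans; apply; rewrite ltnS leq_b1.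
apply/subsetP => -[b c] /setIdP[Hbc /eqP nbhd_bc].
move: (Hbc); rewrite inE /= => /andP[Qb gc].
have Hc : (1, c) \in H by rewrite !inE group1.
have c1 : c = 1.
  have : (1, c) \in pow_nbhd H (b, c).
    by rewrite inE Hc /cyc_cmp cycle_QxC // inE group1 cycle_id.
  rewrite nbhd_bc inE Hc /cyc_cmp !cycle_QxC //= !cycle1 !inE /=.
  by rewrite (negPf a_neq1) group1 /= orbF => /eqP.
rewrite {}c1 {gc Hc} in Hbc nbhd_bc *.
have b2 : b ^+ 2 != 1.
  apply/eqP => b2; have [r [Qr or] not_ar] := Q_incomparable Qa a2.
  have Hr : (r, 1) \in H by rewrite !inE Qr group1.
  have : (r, 1) \in pow_nbhd H (b, 1).
    rewrite inE Hr cyc_cmp_pair ?order1 ?coprimen1 //.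
    by apply/orP; right; apply: Q_sqr1_mem_cycle.
  by rewrite nbhd_bc inE Hr cyc_cmp_pair ?order1 ?coprimen1 // (negPf not_ar) andbF.
have b_a : b \in <[a]>.
  have : (b, 1) \in pow_nbhd H (a, 1) by rewrite -nbhd_bc inE Hbc cyc_cmpxx.
  rewrite inE Hbc cyc_cmp_pair ?order1 ?coprimen1 // => /orP[// | a_b].
  by rewrite (Q_cycle_eq Qb a_b a2) cycle_id.
by rewrite !inE; case: (order4_cycle_gen (Q_order4 Qa a2) b_a b2) => ->; rewrite eqxx ?orbT.
Qed.

Lemma card_nbhd_QxC a : a \in Q -> a ^+ 2 != 1 -> g != 1 ->
  4 < #|pow_nbhd H (a, 1)|.
Proof.
move=> Qa a2 g_neq1; have Ha : (a, 1) \in H by rewrite !inE Qa group1.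
have Hag : (a, g) \in H by rewrite !inE Qa cycle_id.
have sub_nbhd : (a, g) |: <[(a, 1)]> \subset pow_nbhd H (a, 1).
  apply/subsetP => w /setU1P[-> | w_a]; rewrite inE.
    by rewrite Hag /cyc_cmp (cycle_QxC Hag) inE /= cycle_id group1 orbT.
  by rewrite (subsetP _ _ w_a) ?cycle_subG //= /cyc_cmp w_a.
apply: leq_trans (subset_leq_card sub_nbhd); rewrite cardsU1 cycle_QxC // cardsX.
by rewrite /= cycle1 cards1 muln1 -orderE Q_order4 // !inE (negPf g_neq1) andbF.
Qed.


Section PowerGraphIsom.
Variables (gT : finGroupType) (G : {group gT}) (f : gT -> qT * kT).
Hypotheses (f_inj : {in G &, injective f}) (f_im : f @: G = H)
  (f_adj : {in G &, forall x y : gT, pow_adj (f x) (f y) = pow_adj x y}).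

Let f_cmp := pow_iso_cmp f_inj f_adj.
Let f_mem := pow_iso_mem f_im.
Let f_onto := pow_iso_onto f_im.
Let f_nbhd_mem := pow_iso_nbhd_mem f_inj f_im f_adj.
Let f_nbhd_eq := pow_iso_nbhd_eq f_inj f_im f_adj.
Let f_card_nbhd := card_pow_iso_nbhd f_inj f_im f_adj.
Let f_card_twins := card_pow_iso_twins f_inj f_im f_adj.
Let f_clique := pow_iso_clique f_inj f_im f_adj.

Lemma pow_iso_card : #|G| = (8 * #[g])%N.
Proof. by rewrite -card_QxC -f_im card_in_imset. Qed.

(* If (f m).1 squared to 1, f m would be comparable with (i, g), (j, g) and
   (k, g); their preimages would then lie in the cyclic group <[m]>, which
   cannot separate them. *)
Lemma pow_iso_maxcycle_sqr m : m \in G -> pow_nbhd G m = <[m]> -> (f m).1 ^+ 2 != 1.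
Proof.
move=> Gm nbhd_m; apply/eqP => fm12.
have [_ _ _ [[Qi Qj Qk] [oi oj ok] [ij ik jk]] _] := QA.
have sMG : <[m]> \subset G by rewrite cycle_subG.
have preim r : r \in Q -> #[r] = 4 -> exists2 t, t \in <[m]> & f t = (r, g).
  move=> Qr or; have /and3P[Hr _ _] := max_elt_pair Qr or.
  have [t Gt ft] := f_onto Hr; exists t => //.
  rewrite -nbhd_m -f_nbhd_mem // -ft inE Hr /cyc_cmp.
  by rewrite (sqr1_mem_cycle_max_elt (max_elt_pair Qr or)) ?f_mem ?orbT.
have [ti Mi fi] := preim _ Qi oi; have [tj Mj fj] := preim _ Qj oj.
have [tk Mk fk] := preim _ Qk ok.
have cmp_M (u v : gT) : u \in <[m]> -> v \in <[m]> -> cyc_cmp (f u) (f v) = cyc_cmp u v.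
  by move=> /(subsetP sMG) Gu /(subsetP sMG) Gv; rewrite f_cmp.
case/negP: ij; rewrite -(cyc_cmp_QxC Qi Qj) -fi -fj cmp_M //.
apply: (cyclic_cmp_of_common_nbhd (cycle_cyclic m) Mi Mj Mk) => v Mv.
  rewrite -!cmp_M // fi fj fk.
  exact: (common_nbhd_pair Qj Qk Qi oj ok oi jk (f_mem (subsetP sMG _ Mv))).
rewrite -!cmp_M // fi fj fk.
exact: (common_nbhd_pair Qi Qk Qj oi ok oj ik (f_mem (subsetP sMG _ Mv))).
Qed.

(* If <[m]> were a cyclic p-group, the neighbourhood <[m]> of m would be a
   clique, forcing f m = (a, 1), which has at most two twins and more than four
   neighbours; but the generators of a cyclic p-group of order > 4 give more
   than two twins of m. *)
Lemma pow_iso_maxcycle_not_pnat m : m \in G -> pow_nbhd G m = <[m]> ->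
  (f m).1 ^+ 2 != 1 -> <[(f m).2]> != <[g]> -> ~~ (pdiv #[m]).-nat #[m].
Proof.
move=> Gm nbhd_m fm12 fm2g; apply/negP => pm.
have Hm := f_mem Gm; move: (Hm); rewrite inE => /andP[Qfm1 _].
have clique_m : cmp_clique (pow_nbhd G m) by rewrite nbhd_m; apply: pnat_cycle_clique pm.
have clique_fm := f_clique Gm clique_m.
have fm21 := clique_nbhd_QxC Hm fm12 clique_fm.
have def_fm : f m = ((f m).1, 1) by case: (f m) fm21 => ? ? /= ->.
have g_neq1 : g != 1 by apply: contra fm2g => /eqP g1; rewrite fm21 g1.
have om_gt4 : 4 < #[m].
  by rewrite orderE -nbhd_m f_card_nbhd // def_fm card_nbhd_QxC.
have gen_twins : [set v | generator <[m]> v] \subset pow_twins G m.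
  apply/subsetP => v; rewrite inE /generator => /eqP gen_v.
  have Gv : v \in G.
    by rewrite (subsetP _ v (_ : v \in <[m]>)) ?cycle_subG // gen_v cycle_id.
  by rewrite inE Gv (pow_nbhd_cycle _ (esym gen_v)) eqxx.
have : totient #[m] <= 2.
  rewrite totient_gen (leq_trans (subset_leq_card gen_twins)) //.
  by rewrite f_card_twins // def_fm card_twins_QxC.
have [e def_m] := p_natP pm.
have p_pr : prime (pdiv #[m]) by rewrite pdiv_prime // (ltn_trans _ om_gt4).
by rewrite leqNgt def_m totient_pfactor_gt2 // -def_m.
Qed.

Lemma pow_iso_max_elt_nbhd y yb : max_elt y -> yb \in G -> f yb = y ->
  exists2 m, m \in G & pow_nbhd G yb = <[m]>.
Proof.
move=> my Gyb fyb; have /and3P[Hy /eqP oy1 _] := my.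
have [m Gm [yb_m nbhd_m]] := exists_maximal_cycle Gyb.
have Hm := f_mem Gm; move: (Hm); rewrite inE => /andP[Qfm1 _].
have fm_y : f m \in <[y]>.
  by rewrite -pow_nbhd_max_elt // -fyb f_nbhd_mem // inE Gm /cyc_cmp yb_m orbT.
have fm12 := pow_iso_maxcycle_sqr Gm nbhd_m.
have [fm2g | fm2g] := eqVneq <[(f m).2]> <[g]>.
  have mfm : max_elt (f m) by rewrite /max_elt Hm Q_order4 ?fm2g ?eqxx.
  exists m => //; rewrite -nbhd_m; apply/eqP.
  by rewrite -f_nbhd_eq // fyb (pow_nbhd_max_elt_eq my mfm fm_y).
have yb_dom : {in <[m]>, forall v, cyc_cmp yb v}.
  move=> v v_m; have Gv : v \in G by rewrite (subsetP _ _ v_m) ?cycle_subG.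
  have : f v \in pow_nbhd H (f m) by rewrite f_nbhd_mem // nbhd_m.
  move/(subsetP (pow_nbhd_sub_max_elt my fm_y fm12)) => fv_y.
  by rewrite -f_cmp // fyb /cyc_cmp fv_y.
have not_pm := pow_iso_maxcycle_not_pnat Gm nbhd_m fm12 fm2g.
case: (cycle_dominating not_pm yb_m yb_dom) => [yb1 | eq_yb_m]; last first.
  by exists m; rewrite // (pow_nbhd_cycle _ eq_yb_m).
have Qy1 : y.1 \in Q by move: Hy; rewrite inE => /andP[].
have [r [Qr _] not_y1r] := Q_incomparable Qy1 (order4_sqr_neq1 oy1).
have Hr : (r, 1) \in H by rewrite !inE Qr group1.
have [v Gv def_r] := f_onto Hr.
have : f v \in pow_nbhd H y by rewrite -fyb f_nbhd_mem // inE Gv yb1 /cyc_cmp group1 orbT.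
rewrite -def_r pow_nbhd_max_elt // cycle_QxC // inE /= => /andP[r_y1 _].
by case/negP: not_y1r; rewrite /cyc_cmp r_y1.
Qed.

Lemma pow_iso_maxcycle r : r \in Q -> #[r] = 4 ->
  exists2 m, m \in G & #[m] = (4 * #[g])%N /\
    {in G, forall x, f x \in <[(r, g)]> -> x \in <[m]>}.
Proof.
move=> Qr or; have mr := max_elt_pair Qr or; have /and3P[Hr _ _] := mr.
have [yb Gyb def_r] := f_onto Hr.
have [m Gm nbhd_yb] := pow_iso_max_elt_nbhd mr Gyb (esym def_r).
exists m => //; split => [| x Gx fx_r].
  rewrite orderE -nbhd_yb f_card_nbhd // -def_r pow_nbhd_max_elt //.
  by rewrite cycle_QxC // cardsX -!orderE or.
by rewrite -nbhd_yb -f_nbhd_mem // -def_r pow_nbhd_max_elt.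
Qed.

Lemma pow_iso_cover :
  {in G, forall x, exists2 m, m \in G & #[m] = (4 * #[g])%N /\ x \in <[m]>}.
Proof.
move=> x Gx; have [_ _ _ [[Qi Qj Qk] [oi oj ok] _] _] := QA.
have lift r : r \in Q -> #[r] = 4 -> f x \in <[(r, g)]> ->
    exists2 m, m \in G & #[m] = (4 * #[g])%N /\ x \in <[m]>.
  by move=> Qr or fx_r; have [m Gm [om r_m]] := pow_iso_maxcycle Qr or; exists m; auto.
case/or3P: (QxC_cover (f_mem Gx)).
- exact: lift Qi oi.
- exact: lift Qj oj.
- exact: lift Qk ok.
Qed.

End PowerGraphIsom.

End QuaternionTimesCyclic.

Section Recognition.
Variable gT : finGroupType.
Implicit Types (G P : {group gT}) (u v x y z : gT).

(* #|<[x]> * <[y]>| <= #|G| forces #|<[x]> :&: <[y]>| >= #[x] / 2, and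
   <[x ^+ 2]> is the subgroup of <[x]> of order #[x] or #[x] / 2. *)
Lemma sqr_mem_cycle_index2 G x y : x \in G -> y \in G -> #[y] = #[x] ->
  #|G| = (2 * #[x])%N -> x ^+ 2 \in <[y]>.
Proof.
move=> Gx Gy oyx oG; set I := <[x]> :&: <[y]>.
have le_XY : #|<[x]> * <[y]>| <= 2 * #[x].
  by rewrite -oG subset_leq_card // mul_subG ?cycle_subG.
have card_XY := mul_cardG <[x]> <[y]>; rewrite -!orderE oyx -/I in card_XY.
have le_xI : (#[x] * #[x] <= 2 * #[x] * #|I|)%N by rewrite card_XY leq_mul2r le_XY orbT.
have [t def_x] : exists t, #[x] = (t * #|I|)%N.
  by apply/dvdnP; rewrite orderE cardSg ?subsetIl.
have x2_I : #[x ^+ 2] %| #|I|.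
  move: le_xI (order_gt0 x); rewrite def_x.
  case: t def_x => [|[|[|t]]] def_x le_xI x_gt0; try nia.
    by rewrite mul1n in def_x; rewrite -def_x orderXdvd.
  by rewrite orderXdiv def_x ?dvdn_mulr // mulKn.
have sXx2_I : <[x ^+ 2]> \subset I.
  by rewrite -(cardSg_cyclic (cycle_cyclic x)) ?cycle_subG ?mem_cycle ?subsetIl -?orderE.
by have /setIP[] := subsetP sXx2_I _ (cycle_id _).
Qed.

Lemma cycle_order2_uniq x u v : u \in <[x]> -> v \in <[x]> ->
  #[u] = 2 -> #[v] = 2 -> u = v.
Proof.
move=> u_x v_x ou ov.
have eq_uv : <[u]> = <[v]>.
  by apply/eqP; rewrite (eq_subG_cyclic (cycle_cyclic x)) ?cycle_subG // -!orderE ou ov.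
have := cycle_id v; rewrite -eq_uv cycle2g // !inE => /orP[/eqP v1 | /eqP //].
by move: ov; rewrite v1 order1.
Qed.

Lemma isog_Q8_unique_involution P : #|P| = 8 -> ~~ cyclic P ->
  {in P &, forall u v, #[u] = 2 -> #[v] = 2 -> u = v} -> P \isog 'Q_8.
Proof.
move=> oP ncP inv_uniq; have pP : 2.-group P by rewrite /pgroup oP.
have two_P : 2 %| #|P| by rewrite oP.
have [z Pz oz] := Cauchy (isT : prime 2) two_P.
have ntP : P :!=: 1 by apply: contraNneq ncP => ->; apply: cyclic1.
have : #|'Ohm_1(P)| = 2.
  rewrite (OhmE 1 pP) (_ : <<_>> = <[z]>) -?orderE //; apply/eqP.
  rewrite eqEsubset gen_subG cycle_subG mem_gen ?andbT; last first.
    by rewrite !inE Pz expn1 -order_dvdn oz.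
  apply/subsetP => t; rewrite !inE => /andP[Pt]; rewrite expn1 -order_dvdn => t2.
  have [/eqP | ne1] := eqVneq #[t] 1%N.
    by rewrite order_eq1 => /eqP ->; rewrite group1.
  by rewrite (inv_uniq t z) ?cycle_id //; apply/(prime_nt_dvdP _ ne1).
case/(prime_Ohm1P pP ntP)/orP => [cP | /andP[_ /eqP/quaternion_classP[e e_gt2 isoQ]]].
  by rewrite cP in ncP.
have e3 : e = 3.
  apply/eqP; rewrite -(eqn_exp2l _ _ (isT : 1 < 2)); apply/eqP.
  by rewrite -card_quaternion // -(card_isog isoQ) oP.
by rewrite e3 in isoQ.
Qed.

Section CyclicCover.
Variables (G : {group gT}) (n : nat).
Hypotheses (odd_n : odd n) (oG : #|G| = (8 * n)%N)
  (cover : {in G, forall x, exists2 m, m \in G & #[m] = (4 * n)%N /\ x \in <[m]>}).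

Let n_gt0 : 0 < n. Proof. by case: n odd_n. Qed.

Lemma cover_sqr_mem_cycle x y : x \in G -> y \in G ->
  #[x] = (4 * n)%N -> #[y] = (4 * n)%N -> x ^+ 2 \in <[y]>.
Proof.
by move=> Gx Gy ox oy; apply: (sqr_mem_cycle_index2 Gx Gy); rewrite ?ox ?oy // oG mulnA.
Qed.

Lemma cover_unique_involution : {in G &, forall u v, #[u] = 2 -> #[v] = 2 -> u = v}.
Proof.
suff inv_m u m m' : u \in <[m]> -> #[u] = 2 -> m \in G -> m' \in G ->
    #[m] = (4 * n)%N -> #[m'] = (4 * n)%N -> u = m' ^+ (2 * n).
  move=> u v /cover[m Gm [om u_m]] /cover[m' Gm' [om' v_m']] ou ov.
  by rewrite (inv_m u m m') // (inv_m v m' m').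
move=> u_m ou Gm Gm' om om'; have m'2_m := cover_sqr_mem_cycle Gm' Gm om' om.
apply: cycle_order2_uniq u_m _ ou _; first by rewrite expgM groupX.
rewrite orderXdiv om' -[4]/(2 * 2)%N -mulnA; last exact: dvdn_mull.
by rewrite mulnK // muln_gt0.
Qed.

Lemma cover_cent a : a \in G -> #[a] = (4 * n)%N -> G \subset 'C(<[a ^+ 4]>).
Proof.
move=> Ga oa; apply/subsetP => x Gx; rewrite cent_cycle; apply/cent1P.
have [m Gm [om x_m]] := cover Gx.
have a4_m : a ^+ 4 \in <[m]>.
  by rewrite -[4]/(2 * 2)%N expgM groupX // cover_sqr_mem_cycle.
exact: (centsP (cycle_abelian m)).
Qed.

(* The Sylow 2-subgroup is Q8, and a ^+ 4 generates a central complement. *)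
Lemma isog_Q8xZ_of_cover : G \isog setX 'Q_8 (Zp n).
Proof.
have [a Ga [oa _]] := cover (group1 G).
have [P sylP] := Sylow_exists 2 G; have sPG := pHall_sub sylP.
have oP : #|P| = 8.
  rewrite (card_Hall sylP) oG partnM // (@part_p'nat 2 n) ?muln1.
    by rewrite -[8]/(2 ^ 3)%N p_part pfactorK.
  by rewrite p'natE // dvdn2 odd_n.
have ncP : ~~ cyclic P.
  apply/cyclicP => -[x defP]; have Gx : x \in G by rewrite (subsetP sPG) // defP cycle_id.
  have [m Gm [om x_m]] := cover Gx.
  have := order_dvdG x_m; rewrite orderE -defP oP -orderE om.
  by rewrite -[8]/(4 * 2)%N dvdn_pmul2l // dvdn2 odd_n.
have isoP : P \isog 'Q_8.
  apply: isog_Q8_unique_involution => // u v Pu Pv.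
  by apply: cover_unique_involution; apply: (subsetP sPG).
set k := a ^+ 4.
have ok : #[k] = n by rewrite orderXdiv oa ?dvdn_mulr // mulKn.
have tiPK : P :&: <[k]> = 1.
  by apply: coprime_TIg; rewrite oP -orderE ok -[8]/(2 ^ 3)%N coprime_pexpl // coprime2n.
have cPK : <[k]> \subset 'C(P) by rewrite centsC (subset_trans sPG) ?cover_cent.
have defG : P \x <[k]> = G.
  rewrite dprodE //; apply/eqP.
  by rewrite eqEcard mul_subG ?cycle_subG ?groupX //= TI_cardMg // oP -orderE ok oG.
apply: (isog_dprod defG (setX_dprod 'Q_8 (Zp_group n))).
  exact: isog_trans isoP (isog_setX1 _ _).
apply: isog_trans (isog_set1X _ _); rewrite isog_sym.
by rewrite -ok Zp_isog.
Qed.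

End CyclicCover.

End Recognition.

Lemma Zp_cycle_order n : 0 < n -> exists2 g : 'Z_n, Zp n = <[g]> & #[g] = n.
Proof.
move=> n_gt0; case: (ltnP 1 n) => [n_gt1 | n_le1].
  by exists Zp1; [rewrite /Zp n_gt1; apply: Zp_cycle | rewrite order_Zp1 Zp_cast].
have n1 : n = 1%N by apply/eqP; rewrite eqn_leq n_le1 n_gt0.
by exists 1; [rewrite /Zp ltnNge n_le1 cycle1 | rewrite order1 n1].
Qed.

Theorem corollary5 (n : nat) (gT : finGroupType) (G : {group gT}) :
  0 < n -> odd n ->
  (pow_graph_isom G (Q8xZ n) <-> G \isog Q8xZ n).
Proof.
move=> n_gt0 odd_n; split => [[f [f_inj f_im f_adj]] | /isog_pow_graph_isom //].
have [i [j [k QA]]] := quaternion_triple_Q8.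
have [g defZ og] := Zp_cycle_order n_gt0.
rewrite /Q8xZ defZ in f_im; have odd_g : odd #[g] by rewrite og.
apply: isog_Q8xZ_of_cover odd_n _ _; first by rewrite (pow_iso_card QA f_inj f_im) og.
by rewrite -og; apply: (pow_iso_cover QA odd_g f_inj f_im f_adj).
Qed.
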